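(* Let $f : \widehat{\mathbb{Z}} \to \widehat{\mathbb{Z}}$ be congruence preserving and let $n, n'$ be positive integers. Then: (i) $\operatorname{lcm}(\lambda_f(n), \lambda_f(n')) = \lambda_f(\operatorname{lcm}(n,n'))$; in particular, if $n \mid n'$ then $\lambda_f(n) \mid \lambda_f(n')$. (ii) For every prime $p$ and every positive integer $a$, $\lambda_f(p^{a+1})$ divides $\operatorname{lcm}\{1,2,\dots,p\}\cdot \lambda_f(p^a)$. (iii) $\lambda_f^k(n) = \lambda_f^{k+1}(n)$ for all sufficiently large $k$. Moreover, if $f$ is tower-stable, then: (iii') $\lambda_f^k(n) = 1$ for all sufficiently large $k$.
   Context: $\widehat{\mathbb{Z}} = \varprojlim_n \mathbb{Z}/n\mathbb{Z}$; $s\equiv_n t$ means $s-t\in n\widehat{\mathbb{Z}}$. A continuous $f$ is congruence preserving if $s\equiv_n t$ implies $f(s)\equiv_n f(t)$ for all $s,t$, $n\ge1$; it then induces reductions $f_n:\mathbb{Z}/n\mathbb{Z}\to\mathbb{Z}/n\mathbb{Z}$. $\lambda_f(n)$ is the period of $f_n$: the least common multiple over $x \in \mathbb{Z}/n\mathbb{Z}$ of the cycle length of $x$ (the least $l\ge1$ with $f_n^k(x)=f_n^{k+l}(x)$ for some $k\ge0$). $\lambda_f^k$ denotes the $k$-th iterate of $\lambda_f:\mathbb{N}\to\mathbb{N}$. $\alpha(m)$ is the largest prime-power divisor of $m$. A congruence preserving $f$ is tower-stable if $\alpha(\lambda_f(p)) < p$ for every prime $p$ (equivalently, no reduction $f_p$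 is a cyclic permutation of $\mathbb{Z}/p\mathbb{Z}$ of length $p$). *)

From Stdlib Require Import ClassicalEpsilon.
From mathcomp Require Import all_boot.
Set Implicit Arguments. Unset Strict Implicit. Unset Printing Implicit Defensive.

(* An element is a compatible
   family of residues: zres x n is the residue modulo n.+1 (so it lies in
   [0, n]); compatibility along divisibility m.+1 | n.+1. *)
Record Zhat := MkZhat {
  zres : nat -> nat;
  zres_lt : forall n, zres n < n.+1;
  zres_compat : forall m n, m.+1 %| n.+1 -> zres n %% m.+1 = zres m }.

(* image of x in Z/nZ, for n >= 1 *)
Definition res (x : Zhat) (n : nat) : nat := zres x n.-1.

(* s == t mod n in Zhat, i.e. s - t in n Zhat, i.e. s and t have the same
   image in Z/nZ (n >= 1). *)
Definition zcong (n : nat) (s t : Zhat) : Prop := res s n = res t n.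

(* continuity for the profinite topology (basic opens are cosets of m Zhat) *)
Definition zcontinuous (f : Zhat -> Zhat) : Prop :=
  forall (s : Zhat) (n : nat), 0 < n ->
    exists m, 0 < m /\ forall t, zcong m s t -> zcong n (f s) (f t).

Definition cong_preserving (f : Zhat -> Zhat) : Prop :=
  zcontinuous f /\
  forall (s t : Zhat) (n : nat), 0 < n -> zcong n s t -> zcong n (f s) (f t).

Definition nat_to_Zhat (r : nat) : Zhat.
Proof.
refine (@MkZhat (fun n => r %% n.+1) _ _).
- by move=> n; rewrite ltn_mod.
- by move=> m n H; rewrite modn_dvdm.
Defined.

(* the reduction f_n : Z/nZ -> Z/nZ, on residues 0..n-1 *)
Definition fred (f : Zhat -> Zhat) (n : nat) (r : nat) : nat :=
  res (f (nat_to_Zhat r)) n.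

Definition cyc_pred (g : nat -> nat) (x : nat) (l : nat) : Prop :=
  0 < l /\ exists k, iter k g x = iter (k + l) g x.

Definition cyclen (g : nat -> nat) (x : nat) : nat :=
  epsilon (inhabits 0)
    (fun l => cyc_pred g x l /\ forall l', cyc_pred g x l' -> l <= l').

(* lambda_f(n): period of f_n = lcm of cycle lengths of all x in Z/nZ *)
Definition lambda (f : Zhat -> Zhat) (n : nat) : nat :=
  \big[lcmn/1]_(x < n) cyclen (fred f n) x.

(* alpha(m): largest prime-power divisor of m (p^0 = 1 counts) *)
Definition alpha (m : nat) : nat :=
  \max_(d < m.+1 | (d %| m) &&
      [exists p : 'I_m.+1, exists k : 'I_m.+1, prime p && (d == p ^ k :> nat)]) d.

Definition tower_stable (f : Zhat -> Zhat) : Prop :=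
  cong_preserving f /\ forall p, prime p -> alpha (lambda f p) < p.

Definition lcm_upto (p : nat) : nat := \big[lcmn/1]_(1 <= i < p.+1) i.

(* Each reduction f_N is compatible with reduction modulo any divisor of N, which
   makes lambda_f an lcm-morphism (i).  On Z/nmZ, the points visited every
   lambda_f(n) steps all lie in one residue class mod n, which has only m
   elements below nm; so their cycle length is at most m and divides lcm(1..m)
   (ii).  Iterating (ii) bounds every prime factor of lambda_f(m) by a prime
   factor of m, and shows v_q(lambda_f(q^e)) <= e, with e - 1 in place of e
   when v_q(lambda_f(q)) = 0.  Since
     v_q(lambda_f(m)) = max(v_q(lambda_f(m_{>q})), v_q(lambda_f(q^{v_q(m)}))),
   a descending induction over q shows that the part of lambda_f^k(n) above q
   is eventually constant (iii).  Under tower stability, a fixed point N > 1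
   of lambda_f is impossible: at the largest prime q of N, lambda_f strictly
   lowers the q-exponent (iii'). *)

From Stdlib Require Import Classical ClassicalEpsilon.
From mathcomp Require Import all_boot.
Set Implicit Arguments. Unset Strict Implicit. Unset Printing Implicit Defensive.

Lemma ex_least (P : nat -> Prop) :
  (exists n, P n) -> exists n, P n /\ forall m, P m -> n <= m.
Proof.
move=> [n Pn]; elim/ltn_ind: n Pn => n IH Pn.
have [[m [Pm lt_mn]] | no_smaller] := classic (exists m, P m /\ m < n).
  exact: IH Pm.
exists n; split=> // m Pm; rewrite leqNgt; apply/negP => lt_mn.
by apply: no_smaller; exists m.
Qed.

Lemma pigeonhole_nat m (F : nat -> nat) :
  (forall j, j <= m -> F j < m) -> exists i j, [/\ i < j, j <= m & F i = F j].
Proof.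
case: m => [|m] F_lt; first by have := F_lt 0 (leqnn 0).
pose G (j : 'I_m.+2) : 'I_m.+1 := Ordinal (F_lt j (ltn_ord j)).
have /injectivePn[i [j neq_ij eq_Gij]] : ~~ injectiveb G.
  by apply/injectiveP => /leq_card; rewrite !card_ord ltnn.
have eq_Fij : F i = F j by have := congr1 val eq_Gij.
have leq_ord (k : 'I_m.+2) : k <= m.+1 by rewrite -ltnS.
case: (ltngtP i j) => [lt_ij | lt_ji | /val_inj eq_ij].
- by exists i, j; rewrite leq_ord.
- by exists j, i; rewrite leq_ord.
- by rewrite eq_ij eqxx in neq_ij.
Qed.

Lemma iter_periodic_shift (T : Type) (g : T -> T) x k l j :
  iter k g x = iter (k + l) g x -> iter (j + k) g x = iter (j + k + l) g x.
Proof. by move=> per; rewrite iterD per -iterD addnA. Qed.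

Lemma iter_periodic_mul (T : Type) (g : T -> T) x k l j :
  iter k g x = iter (k + l) g x -> iter k g x = iter (k + j * l) g x.
Proof.
move=> per; elim: j => [|j IH]; first by rewrite addn0.
by rewrite mulSn addnCA iterD -IH -iterD addnC -per.
Qed.

Lemma residue_class_collision n m (z : nat -> nat) : 0 < n ->
  (forall j, z j < n * m) -> (forall j, z j = z 0 %[mod n]) ->
  exists i j, [/\ i < j, j <= m & z i = z j].
Proof.
move=> n_gt0 z_lt z_mod.
have z_div_lt j : j <= m -> z j %/ n < m by rewrite ltn_divLR // mulnC.
have [i [j [lt_ij le_jm eq_div]]] := pigeonhole_nat z_div_lt.
exists i, j; split=> //.
by rewrite (divn_eq (z i) n) (divn_eq (z j) n) eq_div (z_mod i) (z_mod j).
Qed.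

Section CycleLength.

Variable g : nat -> nat.

Lemma cyclenP x : (exists l, cyc_pred g x l) ->
  cyc_pred g x (cyclen g x) /\ forall l, cyc_pred g x l -> cyclen g x <= l.
Proof. by move=> /ex_least; apply: epsilon_spec. Qed.

Lemma cyc_pred_dvd x l : (exists l0, cyc_pred g x l0) ->
  cyc_pred g x l <-> 0 < l /\ cyclen g x %| l.
Proof.
move=> /cyclenP[[c_gt0 [k per_c]] min_c]; set c := cyclen g x in c_gt0 per_c min_c *.
split=> [[l_gt0 [k' per_l]] | [l_gt0 /dvdnP[t def_l]]]; last first.
  by split=> //; exists k; rewrite def_l; apply: iter_periodic_mul.
split=> //; set K := k' + k.
have per_cK : iter K g x = iter (K + c) g x by apply: iter_periodic_shift.
have per_lK : iter K g x = iter (K + l) g x.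
  by rewrite /K addnC; apply: iter_periodic_shift.
have [r0 | r_gt0] := posnP (l %% c); first by rewrite /dvdn r0.
suff : c <= l %% c by rewrite leqNgt ltn_mod c_gt0.
apply: min_c; split=> //; exists K.
rewrite per_lK {1}(divn_eq l c) [_ * c + _]addnC addnA -iter_periodic_mul //.
by rewrite (addnC K); apply: iter_periodic_shift per_cK.
Qed.

Lemma bounded_orbit_cyc_pred x n :
  (forall k, iter k g x < n) -> exists l, cyc_pred g x l.
Proof.
move=> orbit_lt.
have [i [j [lt_ij _ eq_ij]]] :=
  @pigeonhole_nat n (fun j => iter j g x) (fun j _ => orbit_lt j).
exists (j - i); split; first by rewrite subn_gt0.
by exists i; rewrite subnKC // ltnW.
Qed.

End CycleLength.

Definition eventually_periodic (g : nat -> nat) (n L : nat) :=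
  forall x, x < n -> exists k, iter k g x = iter (k + L) g x.

Section PeriodBelow.

Variables (g : nat -> nat) (n : nat).
Hypothesis g_lt : forall x, x < n -> g x < n.

Lemma iter_lt x k : x < n -> iter k g x < n.
Proof. by move=> x_lt; elim: k => //= k; apply: g_lt. Qed.

Lemma cyc_pred_exists x : x < n -> exists l, cyc_pred g x l.
Proof. by move=> x_lt; apply: (@bounded_orbit_cyc_pred _ _ n) => k; apply: iter_lt. Qed.

Lemma biglcm_cyclen_gt0 : 0 < \big[lcmn/1]_(x < n) cyclen g x.
Proof.
elim/big_ind: _ => // [a b a_gt0 b_gt0 | x _]; first by rewrite lcmn_gt0 a_gt0.
by have [[]] := cyclenP (cyc_pred_exists (ltn_ord x)).
Qed.

Lemma biglcm_cyclen_dvdP L : 0 < L ->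
  \big[lcmn/1]_(x < n) cyclen g x %| L <-> eventually_periodic g n L.
Proof.
move=> L_gt0; split=> [/dvdn_biglcmP per x x_lt | per].
  have /(cyc_pred_dvd L) dvd_L := cyc_pred_exists x_lt.
  by have [_ [k per_k]] := dvd_L.2 (conj L_gt0 (per (Ordinal x_lt) isT)); exists k.
apply/dvdn_biglcmP => x _; have /(cyc_pred_dvd L) dvd_L := cyc_pred_exists (ltn_ord x).
by have [k per_k] := per x (ltn_ord x); case: (dvd_L.1 (conj L_gt0 (ex_intro _ k per_k))).
Qed.

End PeriodBelow.

Lemma lcm_upto_gt0 m : 0 < lcm_upto m.
Proof.
rewrite /lcm_upto big_seq; elim/big_ind: _ => // [a b a_gt0 b_gt0 | i].
  by rewrite lcmn_gt0 a_gt0.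
by rewrite mem_index_iota => /andP[].
Qed.

Lemma dvdn_lcm_upto d m : 0 < d -> d <= m -> d %| lcm_upto m.
Proof.
by move=> d_gt0 le_dm; rewrite /lcm_upto (big_rem d) ?mem_index_iota ?d_gt0 ?dvdn_lcml.
Qed.

Lemma prime_dvd_lcm_upto r m : prime r -> r %| lcm_upto m -> r <= m.
Proof.
move=> r_pr; apply: contraLR; rewrite -ltnNge => lt_mr.
rewrite /lcm_upto big_seq; elim/big_ind: _ => [|a b ra rb|i].
- by rewrite dvdn1 neq_ltn prime_gt1 ?orbT.
- have dvd_lcm_mul : lcmn a b %| a * b by rewrite dvdn_lcm dvdn_mulr ?dvdn_mull.
  apply: contra (fun dvd_r => dvdn_trans dvd_r dvd_lcm_mul) _.
  by rewrite Euclid_dvdM // negb_or ra.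
- rewrite mem_index_iota => /andP[i_gt0 lt_im]; apply: contraL lt_mr => /(dvdn_leq i_gt0).
  by rewrite -leqNgt => /leq_trans; apply.
Qed.

Lemma logn_lcm_upto p m : prime p -> m < p ^ 2 -> logn p (lcm_upto m) <= 1.
Proof.
move=> p_pr lt_m_p2; suff [] : 0 < lcm_upto m /\ logn p (lcm_upto m) <= 1 by [].
rewrite /lcm_upto big_seq.
apply: (big_ind (fun d => 0 < d /\ logn p d <= 1)) => [|a b [a_gt0 la] [b_gt0 lb]|i].
- by rewrite logn1.
- by rewrite lcmn_gt0 a_gt0 logn_lcm // geq_max la.
- rewrite mem_index_iota => /andP[i_gt0 le_im]; split=> //.
  rewrite leqNgt -pfactor_dvdn //; apply/negP => /(dvdn_leq i_gt0).
  by rewrite leqNgt (leq_ltn_trans _ lt_m_p2) // -ltnS.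
Qed.

Local Notation above q := [pred p : nat | q < p].
Local Notation below q := [pred p : nat | p < q].

Lemma logn_partn p m (pi : nat_pred) : logn p m`_pi = (p \in pi) * logn p m.
Proof.
have [p_pi | p_npi] := boolP (p \in pi).
  by rewrite mul1n -logn_part partn_part ?logn_part // => q /eqP->.
rewrite mul0n; apply/eqP; rewrite -leqn0 leqNgt logn_gt0.
by apply: contra p_npi; apply: pnatPpi (part_pnat _ _).
Qed.

Lemma partn_above_below_lcm q m : 0 < m ->
  m = lcmn m`_(above q) (lcmn m`_q m`_(below q)).
Proof.
move=> m_gt0; apply: eqn_from_log => [//| |p]; first by rewrite !lcmn_gt0 !part_gt0.
rewrite !logn_lcm ?lcmn_gt0 ?part_gt0 // !logn_partn !inE.
by case: ltngtP; rewrite ?mul0n ?mul1n ?max0n ?maxn0.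
Qed.

Lemma partn_above_succ q m : 0 < m -> m`_(above q) = m`_(above q.+1) * m`_q.+1.
Proof.
move=> m_gt0; apply: eqn_from_log => [||p]; rewrite ?muln_gt0 ?part_gt0 //.
rewrite lognM ?part_gt0 // !logn_partn !inE.
by case: (ltngtP p q.+1); rewrite ?mul0n ?mul1n ?addn0.
Qed.

Lemma nat_ind_down (P : nat -> Prop) N :
  (forall q, N <= q -> P q) -> (forall q, P q.+1 -> P q) -> forall q, P q.
Proof.
move=> top step.
have {}top d q : N <= q + d -> P q.
  elim: d q => [|d IH] q; first by rewrite addn0; apply: top.
  by rewrite addnS -addSn => /IH; apply: step.
by move=> q; apply: (top N); rewrite leq_addl.
Qed.

Definition eventually_constant (x : nat -> nat) :=
  exists K, forall k, K <= k -> x k = x K.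

Lemma nonincreasing_eventually_constant (x : nat -> nat) K :
  (forall j, K <= j -> x j.+1 <= x j) -> eventually_constant x.
Proof.
move=> dec; have values_ex : exists v j, K <= j /\ x j = v by exists (x K), K.
have [_ [[J [le_KJ <-]] min_xJ]] := ex_least values_ex.
have dec_from_J d : x (J + d) <= x J.
  elim: d => [|d IH]; first by rewrite addn0.
  by rewrite addnS (leq_trans _ IH) // dec // (leq_trans le_KJ) ?leq_addr.
exists J => k le_Jk; apply/eqP; rewrite eqn_leq -{1}(subnKC le_Jk) dec_from_J.
by apply: min_xJ; exists k; rewrite (leq_trans le_KJ).
Qed.

Lemma eventually_constant_mul (x y : nat -> nat) :
  eventually_constant x -> eventually_constant y ->
  eventually_constant (fun k => x k * y k).
Proof.
move=> [K cx] [K' cy]; exists (maxn K K') => k; rewrite geq_max => /andP[le_Kk le_K'k].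
by rewrite (cx k) // (cy k) // (cx (maxn K K')) ?leq_maxl // (cy (maxn K K')) ?leq_maxr.
Qed.

Lemma eqn_mod_lcm n n' u v :
  (u == v %[mod lcmn n n']) = (u == v %[mod n]) && (u == v %[mod n']).
Proof.
wlog le_vu : u v / v <= u.
  by move=> W; case/orP: (leq_total v u) => /W //; rewrite ![u == _ %[mod _]]eq_sym.
by rewrite !eqn_mod_dvd // dvdn_lcm.
Qed.

Lemma res_nat_to_Zhat r n : 0 < n -> res (nat_to_Zhat r) n = r %% n.
Proof. by case: n. Qed.

Section Reduction.

Variable f : Zhat -> Zhat.
Hypothesis hf : cong_preserving f.

Lemma fred_lt n r : r < n -> fred f n r < n.
Proof. by case: n => // n _; apply: zres_lt. Qed.

Lemma iter_fred_lt n r k : r < n -> iter k (fred f n) r < n.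
Proof. exact/iter_lt/fred_lt. Qed.

Lemma fred_mod d N r : 0 < d -> 0 < N -> d %| N ->
  fred f N r %% d = fred f d (r %% d).
Proof.
move=> d_gt0 N_gt0 dvd_dN; rewrite /fred.
have -> : res (f (nat_to_Zhat r)) N %% d = res (f (nat_to_Zhat r)) d.
  by case: d d_gt0 dvd_dN => // d _; case: N N_gt0 => // N _; apply: zres_compat.
by apply: hf.2; rewrite // /zcong !res_nat_to_Zhat ?modn_mod.
Qed.

Lemma iter_fred_mod d N r k : 0 < d -> 0 < N -> d %| N ->
  iter k (fred f N) r %% d = iter k (fred f d) (r %% d).
Proof. by move=> d_gt0 N_gt0 dvd_dN; elim: k => //= k <-; apply: fred_mod. Qed.

Lemma lambda_gt0 n : 0 < lambda f n.
Proof. exact/biglcm_cyclen_gt0/fred_lt. Qed.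

Lemma lambda_dvdP n L : 0 < L ->
  lambda f n %| L <-> eventually_periodic (fred f n) n L.
Proof. exact/biglcm_cyclen_dvdP/fred_lt. Qed.

Lemma lambda1 : lambda f 1 = 1.
Proof.
apply/eqP; rewrite -dvdn1; apply/lambda_dvdP => // x; rewrite ltnS leqn0 => /eqP ->.
by exists 0; have := @fred_lt 1 0 isT; rewrite ltnS leqn0 => /eqP.
Qed.

Lemma eventually_periodic_dvdn d N L : 0 < d -> 0 < N -> d %| N ->
  eventually_periodic (fred f N) N L -> eventually_periodic (fred f d) d L.
Proof.
move=> d_gt0 N_gt0 dvd_dN per x x_lt.
have [k per_k] := per x (leq_trans x_lt (dvdn_leq N_gt0 dvd_dN)).
by exists k; rewrite -(modn_small x_lt) -!(iter_fred_mod _ _ d_gt0 N_gt0 dvd_dN) per_k.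
Qed.

Lemma eventually_periodic_lcm n n' L : 0 < n -> 0 < n' ->
  eventually_periodic (fred f n) n L -> eventually_periodic (fred f n') n' L ->
  eventually_periodic (fred f (lcmn n n')) (lcmn n n') L.
Proof.
move=> n_gt0 n'_gt0 per per' x x_lt.
have N_gt0 : 0 < lcmn n n' by rewrite lcmn_gt0 n_gt0.
have [k per_k] := per (x %% n) (ltn_pmod _ n_gt0).
have [k' per_k'] := per' (x %% n') (ltn_pmod _ n'_gt0).
exists (k' + k); rewrite -(modn_small (iter_fred_lt _ x_lt)).
rewrite -[RHS](modn_small (iter_fred_lt _ x_lt)).
apply/eqP; rewrite eqn_mod_lcm !iter_fred_mod ?dvdn_lcml ?dvdn_lcmr //.
apply/andP; split; apply/eqP; first exact: iter_periodic_shift.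
by rewrite (addnC k'); apply: iter_periodic_shift.
Qed.

Lemma lambda_dvdn d N : 0 < N -> d %| N -> lambda f d %| lambda f N.
Proof.
move=> N_gt0 dvd_dN; have d_gt0 : 0 < d by apply: dvdn_gt0 dvd_dN.
apply/lambda_dvdP; first exact: lambda_gt0.
by apply: eventually_periodic_dvdn dvd_dN _; rewrite // -lambda_dvdP ?lambda_gt0.
Qed.

Lemma lambda_lcm n n' : 0 < n -> 0 < n' ->
  lcmn (lambda f n) (lambda f n') = lambda f (lcmn n n').
Proof.
move=> n_gt0 n'_gt0; have N_gt0 : 0 < lcmn n n' by rewrite lcmn_gt0 n_gt0.
apply/eqP; rewrite eqn_dvd dvdn_lcm !lambda_dvdn ?dvdn_lcml ?dvdn_lcmr //=.
have L_gt0 : 0 < lcmn (lambda f n) (lambda f n') by rewrite lcmn_gt0 !lambda_gt0.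
apply/lambda_dvdP/eventually_periodic_lcm => //.
  by rewrite -lambda_dvdP ?dvdn_lcml.
by rewrite -lambda_dvdP ?dvdn_lcmr.
Qed.

Lemma lambda_mul n m : 0 < n -> 0 < m ->
  lambda f (n * m) %| lcm_upto m * lambda f n.
Proof.
move=> n_gt0 m_gt0; set L := lambda f n; set g := fred f (n * m).
have dvd_n_nm : n %| n * m by apply: dvdn_mulr.
have nm_gt0 : 0 < n * m by rewrite muln_gt0 n_gt0.
apply/lambda_dvdP; first by rewrite muln_gt0 lcm_upto_gt0 lambda_gt0.
move=> x x_lt.
have [k per_k] := (lambda_dvdP n (lambda_gt0 n)).1 (dvdnn L) (x %% n) (ltn_pmod x n_gt0).
pose z j := iter (k + j * L) g x.
have z_mod j : z j = z 0 %[mod n].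
  by rewrite /z !iter_fred_mod // -!(iter_periodic_mul _ per_k).
have [i [j [lt_ij le_jm eq_z]]] :=
  residue_class_collision n_gt0 (fun j => iter_fred_lt _ x_lt) z_mod.
have per_ij : iter (k + i * L) g x = iter (k + i * L + (j - i) * L) g x.
  by rewrite -addnA -mulnDl subnKC ?(ltnW lt_ij).
have /dvdnP[t def_M] : (j - i) * L %| lcm_upto m * L.
  rewrite dvdn_pmul2r ?lambda_gt0 // dvdn_lcm_upto ?subn_gt0 //.
  exact: leq_trans (leq_subr i j) le_jm.
by exists (k + i * L); rewrite def_M; apply: iter_periodic_mul.
Qed.

Lemma prime_dvd_lambda r m : prime r -> r %| lambda f m ->
  exists2 p, p \in \pi(m) & r <= p.
Proof.
move=> r_pr; elim/ltn_ind: m => m IH r_lam.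
have [le_m1 | gt_m1] := leqP m 1.
  suff lam1 : lambda f m = 1 by rewrite lam1 dvdn1 in r_lam; rewrite (eqP r_lam) in r_pr.
  by case: m le_m1 {IH r_lam} => [|[|]] // _; [rewrite /lambda big_ord0 | apply: lambda1].
set p := pdiv m; have p_pr : prime p := pdiv_prime gt_m1.
have mp_gt0 : 0 < m %/ p by rewrite divn_gt0 ?prime_gt0 // dvdn_leq ?pdiv_dvd 1?ltnW.
have : r %| lcm_upto p * lambda f (m %/ p).
  apply: dvdn_trans r_lam _; rewrite -{1}(divnK (pdiv_dvd m)) -/p.
  exact: lambda_mul (prime_gt0 p_pr).
rewrite Euclid_dvdM // => /orP[/(prime_dvd_lcm_upto r_pr) le_rp | /IH[]].
- by exists p; rewrite // pi_pdiv.
- by rewrite ltn_Pdiv ?prime_gt1 1?ltnW.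
- by move=> q q_mp le_rq; exists q; rewrite // (pi_of_dvd (dvdn_div (pdiv_dvd m))) 1?ltnW.
Qed.

Lemma logn_lambda q m : prime q -> 0 < m ->
  logn q (lambda f m) = maxn (logn q (lambda f m`_(above q))) (logn q (lambda f m`_q)).
Proof.
move=> q_pr m_gt0.
have below0 : logn q (lambda f m`_(below q)) = 0.
  apply/eqP; rewrite -leqn0 leqNgt logn_gt0 mem_primes; apply/negP => /and3P[_ _].
  case/(prime_dvd_lambda q_pr) => p /(pnatPpi (part_pnat _ _)).
  by rewrite inE ltnNge => /negP.
rewrite {1}(partn_above_below_lcm q m_gt0) -!lambda_lcm ?lcmn_gt0 ?part_gt0 //.
by rewrite !logn_lcm ?lcmn_gt0 ?lambda_gt0 // below0 maxn0.
Qed.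

Lemma logn_lambda_mul_prime q n : prime q -> 0 < n ->
  logn q (lambda f (n * q)) <= (logn q (lambda f n)).+1.
Proof.
move=> q_pr n_gt0; have q_gt0 := prime_gt0 q_pr.
apply: leq_trans (dvdn_leq_log _ _ (lambda_mul n_gt0 q_gt0)) _.
  by rewrite muln_gt0 lcm_upto_gt0 lambda_gt0.
rewrite lognM ?lcm_upto_gt0 ?lambda_gt0 // -add1n leq_add2r logn_lcm_upto //.
by rewrite -{1}[q]expn1 ltn_exp2l ?prime_gt1.
Qed.

Lemma logn_lambda_pexpS q e : prime q ->
  logn q (lambda f (q ^ e.+1)) <= logn q (lambda f q) + e.
Proof.
move=> q_pr; elim: e => [|e IH]; first by rewrite expn1 addn0.
rewrite expnSr addnS; apply: leq_trans (logn_lambda_mul_prime q_pr _) _.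
  by rewrite expn_gt0 prime_gt0.
by rewrite ltnS.
Qed.

Lemma logn_lambda_pexp q e : prime q -> logn q (lambda f (q ^ e)) <= e.
Proof.
move=> q_pr; case: e => [|e]; first by rewrite lambda1 logn1.
apply: leq_trans (logn_lambda_pexpS e q_pr) _; rewrite -add1n leq_add2r.
by have := logn_lambda_mul_prime q_pr (ltn0Sn 0); rewrite mul1n lambda1 logn1.
Qed.

End Reduction.

Section IteratedPeriod.

Variables (f : Zhat -> Zhat) (n0 : nat).
Hypotheses (hf : cong_preserving f) (n0_gt0 : 0 < n0).

Local Notation n_ k := (iter k (lambda f) n0).

Lemma iter_lambda_gt0 k : 0 < n_ k.
Proof. by case: k => //= k; apply: lambda_gt0. Qed.

Lemma prime_dvd_iter_lambda k p : p \in \pi(n_ k) -> p <= n0.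
Proof.
elim: k p => [|k IH] p; first by rewrite mem_primes => /and3P[_ _ /dvdn_leq]; apply.
rewrite mem_primes iterS => /and3P[p_pr _ /(prime_dvd_lambda hf p_pr)[q /IH le_qn le_pq]].
exact: leq_trans le_pq le_qn.
Qed.

Lemma partn_above_iter_lambda q k : n0 <= q -> (n_ k)`_(above q) = 1.
Proof.
move=> le_n0q; apply: part_p'nat; apply: sub_in_pnat (pnat_pi (iter_lambda_gt0 k)).
by move=> p /prime_dvd_iter_lambda le_pn0 _; rewrite !inE -leqNgt (leq_trans le_pn0).
Qed.

Lemma logn_iter_lambda_eventually_constant q :
  eventually_constant (fun k => (n_ k)`_(above q)) ->
  eventually_constant (fun k => logn q (n_ k)).
Proof.
move=> [K cK]; have [q_pr | q_npr] := boolP (prime q); last first.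
  by exists 0 => k _; rewrite /logn (negbTE q_npr).
have rec j : K <= j -> logn q (n_ j.+1) =
    maxn (logn q (lambda f (n_ K)`_(above q))) (logn q (lambda f (q ^ logn q (n_ j)))).
  by move=> le_Kj; rewrite iterS logn_lambda ?iter_lambda_gt0 // cK // p_part.
(* Past K the exponent dominates the constant term of [rec], while
   [logn_lambda_pexp] bounds the other term by the exponent itself. *)
apply: (@nonincreasing_eventually_constant _ K.+1) => -[//|k] le_Kk.
by rewrite rec 1?leqW // geq_max logn_lambda_pexp // andbT rec // leq_maxl.
Qed.

Lemma partn_above_iter_lambda_eventually_constant q :
  eventually_constant (fun k => (n_ k)`_(above q)).
Proof.
move: q; apply: (@nat_ind_down _ n0) => [q le_n0q | q const_above].
  by exists 0 => k _; rewrite !partn_above_iter_lambda.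
have [K cK] := logn_iter_lambda_eventually_constant const_above.
have const_part : eventually_constant (fun k => (n_ k)`_q.+1).
  by exists K => k le_Kk; rewrite !p_part cK.
have [K' cK'] := eventually_constant_mul const_above const_part.
exists K' => k le_K'k.
by rewrite !(partn_above_succ q (iter_lambda_gt0 _)) cK'.
Qed.

Lemma iter_lambda_eventually_constant : eventually_constant (fun k => n_ k).
Proof.
have [K cK] := partn_above_iter_lambda_eventually_constant 0.
exists K => k le_Kk; have := cK k le_Kk.
have above0_id j : (n_ j)`_(above 0) = n_ j.
  apply: part_pnat_id; apply: sub_in_pnat (pnat_pi (iter_lambda_gt0 j)).
  by move=> p; rewrite mem_primes inE => /and3P[p_pr _ _] _; apply: prime_gt0.
by rewrite !above0_id.
Qed.

End IteratedPeriod.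

Lemma prime_leq_alpha p m : prime p -> 0 < m -> p %| m -> p <= alpha m.
Proof.
move=> p_pr m_gt0 dvd_pm; have le_pm : p < m.+1 by rewrite ltnS dvdn_leq.
have lt_1m : 1 < m.+1 by rewrite ltnS.
apply: (@leq_bigmax_cond _ _ (fun d : 'I_m.+1 => nat_of_ord d) (Ordinal le_pm)).
rewrite /= dvd_pm /=; apply/existsP; exists (Ordinal le_pm); apply/existsP.
by exists (Ordinal lt_1m); rewrite /= p_pr expn1 eqxx.
Qed.

Lemma logn_lambda_prime_eq0 f p : tower_stable f -> prime p -> logn p (lambda f p) = 0.
Proof.
move=> [hf small_alpha] p_pr; apply/eqP; rewrite -leqn0 leqNgt logn_gt0 mem_primes.
apply/negP => /and3P[_ lam_gt0 dvd_p]; have := small_alpha p p_pr.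
by rewrite ltnNge prime_leq_alpha.
Qed.

Lemma lambda_fixpoint_eq1 f N : tower_stable f -> 0 < N -> lambda f N = N -> N = 1.
Proof.
move=> tsf N_gt0 fixN; have hf := tsf.1.
apply/eqP; rewrite eqn_leq N_gt0 andbT leqNgt; apply/negP => gt_N1.
set q := max_pdiv N; have q_pr : prime q := max_pdiv_prime gt_N1.
have above1 : N`_(above q) = 1.
  apply: part_p'nat; apply: sub_in_pnat (pnat_pi N_gt0) => p /max_pdiv_max le_pq _.
  by rewrite !inE -leqNgt.
have : 0 < logn q N by rewrite logn_gt0 mem_primes q_pr N_gt0 max_pdiv_dvd.
have := logn_lambda hf q_pr N_gt0; rewrite fixN above1 lambda1 logn1 max0n p_part.
case: (logn q N) => // e eq_e _; have := logn_lambda_pexpS hf e q_pr.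
by rewrite -eq_e logn_lambda_prime_eq0 // add0n ltnn.
Qed.

Theorem lemma3p12 (f : Zhat -> Zhat) (hf : cong_preserving f) :
  (forall n n' : nat, 0 < n -> 0 < n' ->
     lcmn (lambda f n) (lambda f n') = lambda f (lcmn n n') /\
     (n %| n' -> lambda f n %| lambda f n')) /\
  (forall p a : nat, prime p -> 0 < a ->
     lambda f (p ^ a.+1) %| lcm_upto p * lambda f (p ^ a)) /\
  (forall n : nat, 0 < n -> exists K, forall k, K <= k ->
     iter k (lambda f) n = iter k.+1 (lambda f) n) /\
  (tower_stable f -> forall n : nat, 0 < n -> exists K, forall k, K <= k ->
     iter k (lambda f) n = 1).
Proof.
split; [|split; [|split]].
- move=> n n' n_gt0 n'_gt0; split; first exact: lambda_lcm.
  exact: lambda_dvdn.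
- move=> p a /prime_gt0 p_gt0 _; rewrite expnSr.
  by apply: (lambda_mul hf); rewrite ?expn_gt0 p_gt0.
- move=> n n_gt0; have [K cK] := iter_lambda_eventually_constant hf n_gt0.
  by exists K => k le_Kk; rewrite cK // cK // leqW.
- move=> tsf n n_gt0; have [K cK] := iter_lambda_eventually_constant tsf.1 n_gt0.
  exists K => k le_Kk; rewrite cK //.
  apply: lambda_fixpoint_eq1 tsf (iter_lambda_gt0 _ n_gt0 K) _.
  by rewrite -iterS cK.
Qed.
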